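(* Let $(Z_n)_{n\ge0}$ be a Galton–Watson process with $Z_0=1$ whose offspring variable $\xi$ has mean $\mu<1$ and satisfies $\mathbf{E}[\xi^{1+\epsilon}]<\infty$ for some $\epsilon>0$. Suppose $1<\beta<\mu^{-1}$. Then there exists $\kappa>0$ such that for all $\delta\in(0,\kappa)$ the process $((Z_n\beta^n)^{1+\delta})_{n\ge0}$ is a supermartingale with respect to the natural filtration $\mathcal{F}_n=\sigma(Z_k;k\le n)$. *)

From HB Require Import structures.
From mathcomp Require Import all_boot all_order all_algebra.
From mathcomp Require Import all_classical all_reals all_analysis.
Set Implicit Arguments. Unset Strict Implicit. Unset Printing Implicit Defensive.
Import Order.TTheory GRing.Theory Num.Theory.
Local Open Scope classical_set_scope.
Local Open Scope ring_scope.

Section GW.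
Context (d : measure_display) (T : measurableType d) (R : realType)
        (P : probability T R).

(* Mutual independence of a family of nat-valued random variables indexed
   by I : the product rule holds for every finite (duplicate-free)
   subfamily and every choice of (measurable = arbitrary) sets of values. *)
Definition mutually_independent (I : eqType) (X : I -> T -> nat) : Prop :=
  forall (s : seq I) (B : I -> set nat), uniq s ->
    (P (\big[setI/setT]_(j <- s) (X j @^-1` B j)) =
     \prod_(j <- s) P (X j @^-1` B j))%E.

(* The offspring variables xi n i (n-th generation, i-th individual) are
   i.i.d. copies of the offspring variable xi0. *)
Definition iid_offspring (xi0 : T -> nat) (xi : nat -> nat -> T -> nat) : Prop :=
  measurable_fun setT xi0 /\
  (forall n i, measurable_fun setT (xi n i)) /\
  mutually_independent (fun j : nat * nat => xi j.1 j.2) /\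
  (forall n i (B : set nat), P (xi n i @^-1` B) = P (xi0 @^-1` B)).

Definition GW_process (xi : nat -> nat -> T -> nat) (Z : nat -> T -> nat) : Prop :=
  (forall t, Z 0%N t = 1%N) /\
  (forall n t, Z n.+1 t = (\sum_(i < Z n t) xi n i t)%N).

Definition natural_filtration (Z : nat -> T -> nat) (n : nat) : set (set T) :=
  <<s [set A | exists k, (k <= n)%N /\ exists B : set nat, A = Z k @^-1` B] >>.

(* Supermartingale with respect to a filtration F (defining property of
   E[X_{n+1} | F_n] <= X_n a.s.). *)
Definition supermartingale (F : nat -> set (set T)) (X : nat -> T -> R) : Prop :=
  (forall n (B : set R), measurable B -> F n (X n @^-1` B)) /\
  (forall n, P.-integrable setT (EFin \o X n)) /\
  (forall n A, F n A ->
     (\int[P]_(x in A) (X n.+1 x)%:E <= \int[P]_(x in A) (X n x)%:E)%E).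

End GW.

From HB Require Import structures.
From mathcomp Require Import all_boot all_order all_algebra.
From mathcomp Require Import all_classical all_reals all_analysis.
From mathcomp Require Import measurable_realfun ring lra.
Import Order.TTheory GRing.Theory Num.Theory.
Local Open Scope classical_set_scope.
Local Open Scope ring_scope.

Set Implicit Arguments. Unset Strict Implicit. Unset Printing Implicit Defensive.

(* Let p = 1 + delta and X_n = (Z_n beta^n)^p.  On the event Z_n = k, the
   power-mean inequality (x_1 + ... + x_k)^p <= k^(p-1) (x_1^p + ... + x_k^p)
   bounds Z_(n+1)^p by k^(p-1) times a sum of k copies of xi^p that are
   independent of F_n, because F_n lies in the sigma-algebra generated by the
   earlier generations (a pi-lambda argument).  Hence
   E[X_(n+1) | F_n] <= beta^p E[xi^p] X_n, and it suffices to make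
   beta^p E[xi^p] <= 1.  The interpolation
   x^(1+delta) <= M^delta x + M^(delta-eps) x^(1+eps) gives
   E[xi^(1+delta)] <= M^delta mu + M^(delta-eps) E[xi^(1+eps)]; since
   beta mu < 1, this is at most beta^-(1+delta) once M is large and delta
   small.  Integrability follows from E[X_n] <= E[X_0] = 1. *)

Section power_inequalities.
Context {R : realType}.
Implicit Types (a c p r s t x y K M : R).

Lemma powR_convex2 p t x y : 1 <= p -> 0 <= t <= 1 -> 0 <= x -> 0 <= y ->
  (t * x + (1 - t) * y) `^ p <= t * x `^ p + (1 - t) * y `^ p.
Proof.
move=> p1 /andP[t0 t1] x0 y0.
have := @convex_powR R p p1 (Itv01 t0 t1) x y.
by rewrite !inE /= !in_itv /= !andbT !convRE; apply.
Qed.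

Lemma powR_mean_le p k (x : nat -> R) : 1 <= p -> (forall i, 0 <= x i) ->
  ((\sum_(i < k.+1) x i) / k.+1%:R) `^ p <= (\sum_(i < k.+1) x i `^ p) / k.+1%:R.
Proof.
move=> p1 x0; elim: k => [|k IH]; first by rewrite !big_ord1 !divr1.
rewrite big_ord_recr [X in _ <= X / _]big_ord_recr /=.
set S := \sum_(i < k.+1) x i; set Sp := \sum_(i < k.+1) x i `^ p.
have S0 : 0 <= S by rewrite sumr_ge0.
set K : R := k.+1%:R.
have K0 : 0 < K by rewrite ltr0n.
have -> : k.+2%:R = K + 1 :> R by rewrite -natr1.
pose t := K / (K + 1).
have t01 : 0 <= t <= 1 by rewrite divr_ge0 ?ler_pdivrMr ?mul1r ?lerDl //; lra.
have -> : (S + x k.+1) / (K + 1) = t * (S / K) + (1 - t) * x k.+1.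
  by rewrite /t; field; lra.
apply: le_trans (powR_convex2 p1 t01 (divr_ge0 S0 (ltW K0)) (x0 _)) _.
have -> : (Sp + x k.+1 `^ p) / (K + 1) = t * (Sp / K) + (1 - t) * x k.+1 `^ p.
  by rewrite /t; field; lra.
by rewrite lerD2r ler_wpM2l //; case/andP: t01.
Qed.

Lemma powR_sum_le p k (x : nat -> R) : 1 <= p -> (forall i, 0 <= x i) ->
  (\sum_(i < k) x i) `^ p <= k%:R `^ (p - 1) * \sum_(i < k) x i `^ p.
Proof.
move=> p1 x0; have p0 : 0 < p by lra.
case: k => [|k]; first by rewrite !big_ord0 powR0 ?gt_eqF // mulr0.
set K : R := k.+1%:R; have K0 : 0 < K by rewrite ltr0n.
have -> : \sum_(i < k.+1) x i = K * ((\sum_(i < k.+1) x i) / K).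
  by rewrite mulrC divfK // gt_eqF.
rewrite powRM ?(ltW K0) ?divr_ge0 ?sumr_ge0 // -(mulr_powRB1 (ltW K0) p0).
rewrite [K * _]mulrC -mulrA ler_wpM2l ?powR_ge0 //.
by rewrite mulrC -ler_pdivlMr //; exact: powR_mean_le.
Qed.

Lemma powR_le_interpolate x M delta eps : 0 <= x -> 0 < M -> 0 < delta -> delta < eps ->
  x `^ (1 + delta) <= M `^ delta * x + M `^ (delta - eps) * x `^ (1 + eps).
Proof.
move=> x0 M0 d0 de.
have [xM|Mx] := leP x M.
  apply: (@le_trans _ _ (M `^ delta * x)); last by rewrite lerDl mulr_ge0 ?powR_ge0.
  rewrite addrC -(mulr_powRB1 x0); last lra.
  by rewrite addrK mulrC ler_wpM2r // ge0_ler_powR ?nnegrE //; lra.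
have x0' : 0 < x by lra.
apply: (@le_trans _ _ (M `^ (delta - eps) * x `^ (1 + eps))); last first.
  by rewrite lerDr mulr_ge0 ?powR_ge0.
have -> : 1 + delta = (1 + eps) + (delta - eps) by ring.
rewrite powRD; last by apply/implyP => _; rewrite gt_eqF.
rewrite mulrC ler_wpM2r ?powR_ge0 //.
have -> : delta - eps = - (eps - delta) by ring.
rewrite !powRN lef_pV2 ?posrE ?powR_gt0  //.
by rewrite ge0_ler_powR ?nnegrE; lra.
Qed.

Lemma exists_powR_le a r : 1 <= a -> 1 < r -> exists2 k : R, 0 < k & a `^ k <= r.
Proof.
move=> a1 r1; have lnr : 0 < ln r by rewrite ln_gt0.
have lna : 0 <= ln a by rewrite ln_ge0.
exists (ln r / (ln a + 1)); first by rewrite divr_gt0 //; lra.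
rewrite -ler_ln ?posrE ?powR_gt0 //; try lra.
rewrite ln_powR mulrAC ler_pdivrMr; last lra.
by rewrite ler_wpM2l //; lra.
Qed.

Lemma exists_powRN_le s c K : 0 < s -> 0 < c -> 0 <= K ->
  exists2 M, 1 <= M & K * M `^ (- s) <= c.
Proof.
move=> s0 c0 K0; set b := 1 + K / c.
have b1 : 1 <= b by rewrite lerDl divr_ge0 // ltW.
exists (b `^ s^-1); first by rewrite -(powRr0 b) ler_powR // invr_ge0 ltW.
rewrite -powRrM mulrN mulVf ?gt_eqF // powR_inv1; last lra.
rewrite ler_pdivrMr; last lra.
by rewrite /b mulrDr mulr1 mulrC divfK ?gt_eqF // lerDr ltW.
Qed.

Lemma exists_small_exponent mu C beta eps : 0 <= mu -> 0 <= C -> 1 < beta ->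
  beta * mu < 1 -> 0 < eps ->
  exists M kappa, [/\ 0 < M, 0 < kappa, kappa <= eps &
    forall delta, 0 < delta -> delta < kappa ->
      beta `^ (1 + delta) * (M `^ delta * mu + M `^ (delta - eps) * C) <= 1].
Proof.
move=> mu0 C0 b1 bmu e0; set q := beta * mu in bmu.
(* M bounds the tail term by (1 - q)/2, and k the mean term by
   2q/(1 + q) <= (1 + q)/2. *)
have q0 : 0 <= q by rewrite mulr_ge0 //; lra.
have [M M1 MC] : exists2 M, 1 <= M & beta ^+ 2 * C * M `^ (- (eps / 2)) <= (1 - q) / 2.
  by apply: exists_powRN_le; rewrite ?mulr_ge0 ?exprn_ge0 //; lra.
have [k k0 bMk] : exists2 k : R, 0 < k & (beta * M) `^ k <= 2 / (1 + q).
  by apply: exists_powR_le; [nra | rewrite ltr_pdivlMr; lra].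
exists M, (Num.min (Num.min k 1) (eps / 2)); split; first lra.
- by rewrite !lt_min k0 /=; lra.
- by rewrite ge_min; apply/orP; right; lra.
move=> delta d0; rewrite !lt_min => /andP[/andP[dk d1] de].
have b0 : 0 < beta by lra.
rewrite powRD; last by rewrite (gt_eqF b0) implybT.
rewrite powRr1 ?(ltW b0) // mulrDr.
have first_term : beta * beta `^ delta * (M `^ delta * mu) <= (1 + q) / 2.
  have -> : beta * beta `^ delta * (M `^ delta * mu) = (beta * M) `^ delta * q.
    by rewrite powRM /q; [ring|lra|lra].
  apply: (@le_trans _ _ (2 / (1 + q) * q)).
    by rewrite ler_wpM2r // (le_trans _ bMk) // ler_powR ?ltW //; nra.
  rewrite -subr_ge0 (_ : _ - _ = (1 - q) ^+ 2 / (2 * (1 + q))).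
    by rewrite divr_ge0 ?sqr_ge0 //; lra.
  by field; lra.
have second_term : beta * beta `^ delta * (M `^ (delta - eps) * C) <= (1 - q) / 2.
  apply: le_trans MC; rewrite mulrA [beta ^+ 2 * C * _]mulrAC ler_wpM2r // expr2.
  apply: ler_pM; rewrite ?mulr_ge0 ?powR_ge0 //; first lra.
    by rewrite ler_wpM2l ?ler1_powR //; lra.
  by rewrite ler_powR //; lra.
lra.
Qed.

End power_inequalities.

Section nat_valued_functions.
Context d (T : measurableType d).
Implicit Types (f g N : T -> nat).

Lemma measurable_preimage_nat f (Y : set nat) :
  measurable_fun setT f -> measurable (f @^-1` Y).
Proof. by move=> mf; rewrite -[_ @^-1` _]setTI; exact: mf. Qed.

Lemma measurable_fun_nat_comp d' (U : measurableType d') f (h : nat -> U) (D : set T) :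
  measurable D -> measurable_fun setT f -> measurable_fun D (h \o f).
Proof. by move=> mD mf; apply: measurable_funTS; exact: measurableT_comp. Qed.

Lemma measurable_fun_nat_index d' (U : measurableType d') N (g : nat -> T -> U) :
  measurable_fun setT N -> (forall m, measurable_fun setT (g m)) ->
  measurable_fun setT (fun t => g (N t) t).
Proof.
move=> mN mg _ Y mY; rewrite setTI.
rewrite (_ : _ @^-1` _ = \bigcup_m (N @^-1` [set m] `&` g m @^-1` Y)).
  apply: bigcup_measurable => m _; apply: measurableI.
    exact: measurable_preimage_nat.
  by rewrite -[_ @^-1` _]setTI; exact: mg.
by apply/seteqP; split => [t Yt|t [m _ [/= -> //]]]; exists (N t).
Qed.

Lemma measurable_fun_natD f g : measurable_fun setT f -> measurable_fun setT g ->
  measurable_fun setT (fun t => f t + g t)%N.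
Proof.
move=> mf mg; apply: (measurable_fun_nat_index (g := fun a t => a + g t)%N) => // a.
exact: (measurable_fun_nat_comp (addn a) measurableT mg).
Qed.

Lemma measurable_fun_natsum (f : nat -> T -> nat) m :
  (forall i, measurable_fun setT (f i)) ->
  measurable_fun setT (fun t => \sum_(i < m) f i t)%N.
Proof.
move=> mf; elim: m => [|m IH].
  by under eq_fun do rewrite big_ord0; exact: measurable_cst.
under eq_fun do rewrite big_ord_recr /=.
exact: measurable_fun_natD.
Qed.

End nat_valued_functions.

Section integral_nat_valued.
Local Open Scope ereal_scope.
Context d (T : measurableType d) (R : realType).

Lemma ge0_integral_nat_partition (mu : {measure set T -> \bar R}) (A : set T)
    (W : T -> nat) (f : T -> \bar R) :
  measurable A -> measurable_fun setT W -> measurable_fun A f ->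
  (forall x, A x -> 0 <= f x) ->
  \int[mu]_(x in A) f x = \sum_(k <oo) \int[mu]_(x in A `&` W @^-1` [set k]) f x.
Proof.
move=> mA mW mf f0.
have eA : A = \bigcup_k (A `&` W @^-1` [set k]).
  by apply/seteqP; split => [t At|t [k _ []//]]; exists (W t).
rewrite {1 2 3}eA in mf f0 *; apply: ge0_integral_bigcup => //.
  by move=> k; apply: measurableI => //; exact: measurable_preimage_nat.
apply/trivIsetP => i j _ _ ij; apply/seteqP; split => // t [[_ /= ->] [_ /= e]].
by move: ij; rewrite e eqxx.
Qed.

Lemma integral_nat_level_set (mu : {measure set T -> \bar R}) (A : set T)
    (W : T -> nat) (h : nat -> \bar R) k :
  measurable A -> measurable_fun setT W ->
  \int[mu]_(x in A `&` W @^-1` [set k]) h (W x) = h k * mu (A `&` W @^-1` [set k]).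
Proof.
move=> mA mW; rewrite -integral_cst; last first.
  by apply: measurableI => //; exact: measurable_preimage_nat.
by apply: eq_integral => x /[!inE] -[_ /= ->].
Qed.

Lemma integral_indep_nat (P : probability T R) (B : set T) (X X0 : T -> nat)
    (g : nat -> R) :
  measurable B -> measurable_fun setT X -> measurable_fun setT X0 ->
  (forall j, (0 <= g j)%R) ->
  (forall j, P (B `&` X @^-1` [set j]) = P B * P (X0 @^-1` [set j])) ->
  \int[P]_(x in B) (g (X x))%:E = P B * \int[P]_x (g (X0 x))%:E.
Proof.
move=> mB mX mX0 g0 indep.
have g0E j : 0 <= (g j)%:E by rewrite lee_fin.
have mg (D : set T) (Y : T -> nat) : measurable D -> measurable_fun setT Y ->
    measurable_fun D (fun x => (g (Y x))%:E).
  by move=> mD mY; exact: (measurable_fun_nat_comp (fun j => (g j)%:E) mD mY).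
rewrite (ge0_integral_nat_partition _ mB mX (mg _ _ mB mX)) //.
rewrite (ge0_integral_nat_partition _ measurableT mX0 (mg _ _ measurableT mX0)) //.
under eq_eseriesr do rewrite (integral_nat_level_set _ (fun j => (g j)%:E) _ mB mX).
under [X in _ = _ * X]eq_eseriesr do
  rewrite (integral_nat_level_set _ (fun j => (g j)%:E) _ measurableT mX0) setTI.
rewrite -[P B]fineK ?fin_num_measure // -nneseriesZl; last first.
  by move=> j _; rewrite mule_ge0.
apply: eq_eseriesr => j _; rewrite muleCA fineK ?fin_num_measure //.
by congr (_ * _); exact: indep.
Qed.

Lemma integral_powR_interpolate (P : probability T R) (X : T -> nat)
    (mu C M delta eps : R) :
  measurable_fun setT X -> (0 < M)%R -> (0 < delta)%R -> (delta < eps)%R ->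
  \int[P]_x ((X x)%:R)%:E = mu%:E ->
  \int[P]_x ((X x)%:R `^ (1 + eps))%:E = C%:E ->
  \int[P]_x ((X x)%:R `^ (1 + delta))%:E <=
  (M `^ delta * mu + M `^ (delta - eps) * C)%:E.
Proof.
move=> mX M0 d0 de Emu EC.
have mXp (g : nat -> R) : measurable_fun setT (fun x => (g (X x))%:E).
  exact: (measurable_fun_nat_comp (fun j => (g j)%:E) measurableT mX).
have cX_ge0 c r x : (0 <= c)%R -> 0 <= c%:E * ((X x)%:R `^ r)%:E.
  by move=> c0; rewrite -EFinM lee_fin mulr_ge0 ?powR_ge0.
apply: (@le_trans _ _ (\int[P]_x ((M `^ delta)%:E * ((X x)%:R `^ 1)%:E +
    (M `^ (delta - eps))%:E * ((X x)%:R `^ (1 + eps))%:E))).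
  apply: ge0_le_integral => //.
  - exact: (mXp (fun j => j%:R `^ (1 + delta))%R).
  - apply: emeasurable_funD; apply: measurable_funeM.
      exact: (mXp (fun j => j%:R `^ 1)%R).
    exact: (mXp (fun j => j%:R `^ (1 + eps))%R).
  move=> x _; rewrite -!EFinM -EFinD lee_fin powRr1 ?ler0n //.
  exact: powR_le_interpolate.
rewrite ge0_integralD //; last 4 first.
- by move=> x _; exact: cX_ge0 (powR_ge0 _ _).
- by apply: measurable_funeM; exact: (mXp (fun j => j%:R `^ 1)%R).
- by move=> x _; exact: cX_ge0 (powR_ge0 _ _).
- by apply: measurable_funeM; exact: (mXp (fun j => j%:R `^ (1 + eps))%R).
rewrite !ge0_integralZl_EFin ?powR_ge0 //; last 2 first.
- exact: (mXp (fun j => j%:R `^ (1 + eps))%R).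
- exact: (mXp (fun j => j%:R `^ 1)%R).
under eq_integral do rewrite powRr1 ?ler0n //.
by rewrite Emu EC -!EFinM -EFinD.
Qed.

End integral_nat_valued.

Section independent_events.
Local Open Scope ereal_scope.
Context d (T : measurableType d) (R : realType) (P : probability T R).

Definition indep_with (E : set T) : set (set T) :=
  [set B | measurable B /\ P (B `&` E) = P B * P E].

Lemma lambda_system_indep_with E : measurable E -> lambda_system setT (indep_with E).
Proof.
move=> mE; have PE : P E = (fine (P E))%:E by rewrite fineK ?fin_num_measure.
apply/dynkin_lambda_system; split.
- by split => //; rewrite setTI probability_setT mul1e.
- move=> B [mB PBE]; split; first exact: measurableC.
  have -> : P (~` B `&` E) = P E - P (E `&` B).
    rewrite setIC -setDE; apply: measureD => //.
    by rewrite (le_lt_trans (probability_le1 _ mE)) ?ltry.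
  rewrite probability_setC // setIC PBE PE -[P B]fineK ?fin_num_measure //.
  by rewrite -EFinM -EFinB -EFinB -EFinM mulrBl mul1r.
- move=> F tF FE; have mF k : measurable (F k) by case: (FE k).
  split; first exact: bigcup_measurable.
  have mFE k : measurable (F k `&` E) by exact: measurableI.
  have -> : P (\bigcup_k F k `&` E) = \sum_(k <oo | k \in setT) P (F k `&` E).
    rewrite setI_bigcupl; apply: (measure_bigcup P) => //.
    apply/trivIsetP => a b _ _ ab; move/trivIsetP: tF => /(_ a b I I ab) Fab.
    by apply/seteqP; split => // t [[Fa _] [Fb _]]; rewrite -Fab.
  have -> : P (\bigcup_k F k) = \sum_(k <oo | k \in setT) P (F k).
    exact: measure_bigcup.
  under eq_eseriesr do rewrite (proj2 (FE _)).
  rewrite PE muleC -nneseriesZl; last by move=> k _; exact: measure_ge0.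
  by apply: eq_eseriesr => k _; rewrite muleC.
Qed.

Lemma sigma_indep_with (G : set (set T)) E : measurable E -> setI_closed G ->
  G `<=` indep_with E -> <<s G >> `<=` indep_with E.
Proof.
move=> mE GI GE.
exact: (lambda_system_subset GI (lambda_system_indep_with mE) GE).
Qed.

End independent_events.

Section offspring_array.
Context d (T : measurableType d) (R : realType) (P : probability T R).
Variable xi : nat -> nat -> T -> nat.
Hypothesis mxi : forall n i, measurable_fun setT (xi n i).
Hypothesis xi_indep : mutually_independent P (fun j : nat * nat => xi j.1 j.2).

Definition past_events n : set (set T) :=
  [set A | exists s (B : nat * nat -> set nat), [/\ uniq s,
     all (fun j => j.1 < n)%N s & A = \big[setI/setT]_(j <- s) xi j.1 j.2 @^-1` B j]].

Lemma setI_closed_past_events n : setI_closed (past_events n).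
Proof.
move=> _ _ [s1 [B1 [u1 a1 ->]]] [s2 [B2 [u2 a2 ->]]].
pose B j := (if j \in s1 then B1 j else setT) `&` (if j \in s2 then B2 j else setT).
exists (undup (s1 ++ s2)), B; split; first exact: undup_uniq.
  apply/allP => j; rewrite mem_undup mem_cat.
  by case/orP => js; [exact: (allP a1) | exact: (allP a2)].
rewrite -!bigcap_seq; apply/seteqP; split => t.
  move=> [H1 H2] j _; rewrite /B.
  by split; case: ifPn => [js|//]; [exact: H1 | exact: H2].
move=> H; split => j js; have /H : j \in undup (s1 ++ s2).
  1,3: by rewrite mem_undup mem_cat js ?orbT.
all: by rewrite /B /= js => -[].
Qed.

Lemma past_events_indep n i (Y : set nat) :
  past_events n `<=` indep_with P (xi n i @^-1` Y).
Proof.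
move=> _ [s [B [us sn ->]]]; split.
  by apply: bigsetI_measurable => j _; exact: measurable_preimage_nat.
have nis : (n, i) \notin s by apply/negP => /(allP sn); rewrite ltnn.
pose B' j := if j == (n, i) then Y else B j.
have B'E : {in s, B' =1 B}.
  by move=> j js; rewrite /B'; case: eqP => // ji; move: nis; rewrite -ji js.
have := @xi_indep ((n, i) :: s) B'; rewrite /= nis us !big_cons => /(_ erefl).
rewrite (eq_big_seq (fun j => xi j.1 j.2 @^-1` B j)); last by move=> j /B'E ->.
rewrite (eq_big_seq (fun j => P (xi j.1 j.2 @^-1` B j))); last by move=> j /B'E ->.
by rewrite /B' eqxx -(xi_indep B us) setIC muleC.
Qed.

Lemma sigma_past_events_indep n i (Y : set nat) :
  <<s past_events n >> `<=` indep_with P (xi n i @^-1` Y).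
Proof.
apply: sigma_indep_with; first exact: measurable_preimage_nat.
  exact: setI_closed_past_events.
exact: past_events_indep.
Qed.

Lemma sigma_past_events_measurable n : <<s past_events n >> `<=` measurable.
Proof. by move=> B /(sigma_past_events_indep 0 set0) []. Qed.

End offspring_array.

Lemma measurable_GW_generation d (M : measurableType d)
    (xi : nat -> nat -> M -> nat) (Z : nat -> M -> nat) n :
  GW_process xi Z -> (forall m i, (m < n)%N -> measurable_fun setT (xi m i)) ->
  forall k, (k <= n)%N -> measurable_fun setT (Z k).
Proof.
move=> [Z0 ZS] mxi; elim=> [_|k IH kn].
  by rewrite (_ : Z 0%N = cst 1%N); [exact: measurable_cst | apply/funext].
have -> : Z k.+1 = fun t => (\sum_(i < Z k t) xi k i t)%N.
  by apply/funext => t; rewrite ZS.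
apply: (measurable_fun_nat_index (g := fun m t => \sum_(i < m) xi k i t)%N).
  exact/IH/ltnW.
by move=> m; apply: measurable_fun_natsum => i; exact: mxi.
Qed.

Section GW_filtration.
Context d (T : measurableType d).
Variables (xi : nat -> nat -> T -> nat) (Z : nat -> T -> nat).
Hypothesis mxi : forall n i, measurable_fun setT (xi n i).
Hypothesis GW : GW_process xi Z.

Lemma measurable_Z k : measurable_fun setT (Z k).
Proof. exact: (measurable_GW_generation GW (fun m i _ => mxi m i) (leqnn k)). Qed.

Lemma natural_filtration_measurable n : natural_filtration Z n `<=` measurable.
Proof.
apply: smallest_sub; first exact: sigma_algebra_measurable.
by move=> _ [k [_ [B ->]]]; exact/measurable_preimage_nat/measurable_Z.
Qed.

Let past_measurableType n := g_sigma_algebraType (past_events xi n).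

Lemma natural_filtration_sub_past n :
  natural_filtration Z n `<=` <<s past_events xi n >>.
Proof.
(* Read the GW recursion in the measurable space generated by past events. *)
have mxi_past m i : (m < n)%N ->
    measurable_fun (T := past_measurableType n) setT (xi m i).
  move=> mn _ Y _; rewrite setTI; apply: sub_gen_smallest.
  exists [:: (m, i)], (fun _ => Y); split; rewrite //= ?mn //.
  by rewrite big_seq1.
apply: smallest_sub; first exact: smallest_sigma_algebra.
move=> _ [k [kn [B ->]]]; rewrite -[_ @^-1` _]setTI.
exact: (measurable_GW_generation (M := past_measurableType n) GW mxi_past kn).
Qed.

Lemma natural_filtration_level_set n k A : natural_filtration Z n A ->
  natural_filtration Z n (A `&` Z n @^-1` [set k]).
Proof.
move=> FA; apply: (@measurableI _ (g_sigma_algebraType _) _ _ FA).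
by apply: sub_gen_smallest; exists n; split => //; exists [set k].
Qed.

End GW_filtration.

Section GW_step.
Local Open Scope ereal_scope.
Context d (T : measurableType d) (R : realType) (P : probability T R).
Variables (xi0 : T -> nat) (xi : nat -> nat -> T -> nat) (Z : nat -> T -> nat).
Hypothesis mxi0 : measurable_fun setT xi0.
Hypothesis mxi : forall n i, measurable_fun setT (xi n i).
Hypothesis xi_indep : mutually_independent P (fun j : nat * nat => xi j.1 j.2).
Hypothesis xi_law : forall n i (B : set nat), P (xi n i @^-1` B) = P (xi0 @^-1` B).
Hypothesis GW : GW_process xi Z.
Variables (beta p e : R).
Hypotheses (beta_gt0 : (0 < beta)%R) (p_ge1 : (1 <= p)%R).
Hypothesis xi0_moment : \int[P]_x ((xi0 x)%:R `^ p)%:E = e%:E.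
Hypothesis contraction : (beta `^ p * e <= 1)%R.

Let X n t := (((Z n t)%:R * beta ^+ n) `^ p)%R.

Let measurable_X n (D : set T) : measurable D -> measurable_fun D (fun x => (X n x)%:E).
Proof.
move=> mD; exact: (measurable_fun_nat_comp (fun j => ((j%:R * beta ^+ n) `^ p)%:E)
  mD (measurable_Z mxi GW n)).
Qed.

Lemma integral_offspring_moment n i B : <<s past_events xi n >> B ->
  \int[P]_(x in B) ((xi n i x)%:R `^ p)%:E = P B * e%:E.
Proof.
move=> pastB; have mB := sigma_past_events_measurable mxi xi_indep pastB.
rewrite -xi0_moment.
rewrite (integral_indep_nat (g := fun j => j%:R `^ p)%R mB (mxi n i) mxi0) //.
move=> j; rewrite -(xi_law n i).
by case: (sigma_past_events_indep mxi xi_indep i [set j] pastB).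
Qed.

Lemma level_set_step n k B : <<s past_events xi n >> B -> B `<=` Z n @^-1` [set k] ->
  \int[P]_(x in B) (X n.+1 x)%:E <= \int[P]_(x in B) (X n x)%:E.
Proof.
move=> pastB BZ; have mB := sigma_past_events_measurable mxi xi_indep pastB.
have p_gt0 : (0 < p)%R by exact: lt_le_trans ltr01 p_ge1.
have beta_ge0 : (0 <= beta)%R := ltW beta_gt0.
set c := ((beta ^+ n.+1) `^ p * k%:R `^ (p - 1))%R.
have mxip i : measurable_fun B (fun x => ((xi n i x)%:R `^ p)%:E).
  exact: (measurable_fun_nat_comp (fun j => (j%:R `^ p)%:E) mB (mxi n i)).
have xip_ge0 i x : B x -> 0 <= ((xi n i x)%:R `^ p)%:E by rewrite lee_fin powR_ge0.
have -> : \int[P]_(x in B) (X n x)%:E = ((k%:R * beta ^+ n) `^ p)%:E * P B.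
  rewrite -integral_cst //.
  by apply: eq_integral => x /[!inE] /BZ /= Znx; rewrite /X Znx.
apply: (@le_trans _ _ (\int[P]_(x in B) (c%:E * \sum_(i < k) ((xi n i x)%:R `^ p)%:E))).
  apply: ge0_le_integral => //.
  - by move=> x _; rewrite lee_fin powR_ge0.
  - exact: measurable_X.
  - by apply: measurable_funeM; exact: emeasurable_sum.
  move=> x /BZ /= Znx; case: GW => _ ZS.
  rewrite /X ZS Znx sumEFin -EFinM lee_fin natr_sum powRM ?sumr_ge0 ?exprn_ge0 //.
  rewrite mulrC /c -mulrA ler_wpM2l ?powR_ge0 //.
  by apply: (@powR_sum_le _ p k (fun i => (xi n i x)%:R)).
rewrite ge0_integralZl_EFin ?ge0_integral_sum //; last 3 first.
- by move=> x Bx; apply: sume_ge0 => i _; exact: xip_ge0.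
- exact: emeasurable_sum.
- by rewrite mulr_ge0 ?powR_ge0.
under eq_bigr do rewrite integral_offspring_moment //.
rewrite -[P B]fineK ?fin_num_measure // -EFinM sumEFin sumr_const card_ord -!EFinM.
rewrite lee_fin -[(_ *+ k)%R]mulr_natr /c exprSr !powRM ?ler0n ?exprn_ge0 //.
rewrite -(mulr_powRB1 (ler0n _ k) p_gt0).
rewrite [leLHS](_ : _ = k%:R * k%:R `^ (p - 1) * (beta ^+ n) `^ p * fine (P B) *
  (beta `^ p * e))%R; last by ring.
by rewrite -[leRHS]mulr1 ler_wpM2l // !mulr_ge0 ?powR_ge0 ?fine_ge0 ?measure_ge0.
Qed.

Lemma GW_step n A : natural_filtration Z n A ->
  \int[P]_(x in A) (X n.+1 x)%:E <= \int[P]_(x in A) (X n x)%:E.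
Proof.
move=> FA; have mA := natural_filtration_measurable mxi GW FA.
have X_ge0 m x : 0 <= (X m x)%:E by rewrite lee_fin powR_ge0.
have mZn := measurable_Z mxi GW n.
rewrite (ge0_integral_nat_partition _ mA mZn (measurable_X n.+1 mA)
  (fun x _ => X_ge0 n.+1 x)).
rewrite (ge0_integral_nat_partition _ mA mZn (measurable_X n mA)
  (fun x _ => X_ge0 n x)).
apply: lee_nneseries => [k _ _|k _].
  by apply: integral_ge0 => x _; exact: X_ge0.
apply: (@level_set_step n k); last by move=> x [].
by apply: (natural_filtration_sub_past GW); exact: natural_filtration_level_set.
Qed.

Lemma GW_power_supermartingale : supermartingale P (natural_filtration Z) X.
Proof.
have F_T n : natural_filtration Z n setT.
  by apply: sub_gen_smallest; exists 0%N; split => //; exists setT.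
have X_le1 n : \int[P]_x (X n x)%:E <= 1.
  elim: n => [|n IH]; last exact: le_trans (GW_step (F_T n)) IH.
  under eq_integral do rewrite /X (proj1 GW) expr0 mulr1 powR1.
  rewrite integral_cst // mul1e; apply: probability_le1; exact: measurableT.
split; last split.
- move=> n B mB; apply: sub_gen_smallest; exists n; split => //.
  by exists ((fun j : nat => ((j%:R * beta ^+ n) `^ p)%R) @^-1` B).
- move=> n; apply/integrableP; split; first exact: measurable_X.
  under eq_integral do rewrite /= ger0_norm ?lee_fin ?powR_ge0 //.
  exact: le_lt_trans (X_le1 n) (ltry _).
- exact: GW_step.
Qed.

End GW_step.

Unset Implicit Arguments.

Theorem lemma6p1 (d : measure_display) (T : measurableType d) (R : realType)
  (P : probability T R) (xi0 : T -> nat) (xi : nat -> nat -> T -> nat)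
  (Z : nat -> T -> nat) (mu beta : R) :
  iid_offspring P xi0 xi ->
  GW_process xi Z ->
  (\int[P]_x ((xi0 x)%:R)%:E)%E = mu%:E ->
  mu < 1 ->
  (exists eps : R, 0 < eps /\
     (\int[P]_x (((xi0 x)%:R) `^ (1 + eps))%:E < +oo)%E) ->
  1 < beta -> beta * mu < 1 ->
  exists kappa : R, 0 < kappa /\
    forall delta : R, 0 < delta -> delta < kappa ->
      supermartingale P (natural_filtration Z)
        (fun n t => ((Z n t)%:R * beta ^+ n) `^ (1 + delta)).
Proof.
(* mu < 1 is implied by beta * mu < 1 and 1 < beta. *)
move=> [mxi0 [mxi [xi_indep xi_law]]] GW Emu _ [eps [eps_gt0 EC_lty]] beta_gt1 beta_mu.
pose moment r := (\int[P]_x ((xi0 x)%:R `^ r)%:E)%E.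
have momentE r : (moment r < +oo)%E -> moment r = (fine (moment r))%:E.
  move=> lty; rewrite fineK // ge0_fin_numE //.
  by apply: integral_ge0 => x _; rewrite lee_fin powR_ge0.
have mu_ge0 : 0 <= mu.
  by rewrite -lee_fin -Emu; apply: integral_ge0 => x _; rewrite lee_fin.
have C_ge0 : 0 <= fine (moment (1 + eps)).
  by rewrite fine_ge0 // integral_ge0 // => x _; rewrite lee_fin powR_ge0.
have [M [kappa [M_gt0 kappa_gt0 kappa_le kappa_small]]] :=
  exists_small_exponent mu_ge0 C_ge0 beta_gt1 beta_mu eps_gt0.
exists kappa; split => // delta delta_gt0 delta_lt.
have moment_le := integral_powR_interpolate mxi0 M_gt0 delta_gt0
  (lt_le_trans delta_lt kappa_le) Emu (momentE _ EC_lty).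
have moment_delta := momentE _ (le_lt_trans moment_le (ltry _)).
apply: (GW_power_supermartingale mxi0 mxi xi_indep xi_law GW _ _ moment_delta); try lra.
apply: le_trans (kappa_small _ delta_gt0 delta_lt); rewrite ler_wpM2l ?powR_ge0 //.
by rewrite -lee_fin -moment_delta.
Qed.
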